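(* Let $d \in \mathbb{N}$, $L \in \mathbb{N}$ with $L\geq 3$, $B \in \mathbb{N}$ with $B\geq 3$, $c > 0$, $q \in [1,2]$, and $s \in \mathbb{N}$ with $s \leq \min \{ d, \frac{B}{3} \}$. Then \[ \nu \cdot \frac{c^L s^{1 - \frac{2}{q}} / (2 \cdot 3^{2/q})}{M s}\, \vartheta_{M,y}^{(s)} \in \mathcal{H}_{(d,B,\dots,B,1),c}^q \quad \text{for all } M \in \mathbb{N},\ \nu \in \{ \pm 1 \},\ y \in [0,1]^d, \] where $B$ appears $L-1$ times in $(d,B,\dots,B,1)$.
   Context: Let $\varrho(x)=\max\{0,x\}$ (componentwise on vectors). For $M>0$, $\sigma\in\mathbb{R}$: $\Lambda_{M,\sigma}(t)=0$ if $t\le\sigma-\frac1M$, and $\Lambda_{M,\sigma}(t)=1-M|t-\sigma|$ if $t\ge\sigma-\frac1M$. For $y\in\mathbb{R}^d$, $s\in\{1,\dots,d\}$: $\vartheta^{(s)}_{M,y}(x)=\varrho\big(\sum_{i=1}^s\Lambda_{M,y_i}(x_i)-(s-1)\big)$, $x\in\mathbb{R}^d$. Neural networks: for $(N_0,\dots,N_L)$ and $\Phi=((W^i,b^i))_{i=1}^L$, $W^i\in\mathbb{R}^{N_i\times N_{i-1}}$, $b^i\in\mathbb{R}^{N_i}$, the realization is $R(\Phi)(x)=x^L$ with $x^0=x$, $x^i=\varrho(W^ix^{i-1}+b^i)$ for $1\le i\le L-1$, $x^L=W^Lx^{L-1}+b^L$. With entrywise $\ell^q$ norms and $\|\Phi\|_{\ell^q}=\max_i\max\{\|W^i\|_{\ell^q},\|b^i\|_{\ell^q}\}$,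 set $\mathcal{H}^q_{(N_0,\dots,N_L),c}=\{R(\Phi):\|\Phi\|_{\ell^q}\le c\}$. *)

From HB Require Import structures.
From mathcomp Require Import all_boot all_order all_algebra.
From mathcomp Require Import all_classical all_reals.
From mathcomp Require Import exp.
Set Implicit Arguments. Unset Strict Implicit. Unset Printing Implicit Defensive.
Import Order.TTheory GRing.Theory Num.Theory.
Local Open Scope ring_scope.

Section Defs.
Variable R : realType.

Definition relu (x : R) : R := Num.max 0 x.
Definition relu_vec n (v : 'cV[R]_n) : 'cV[R]_n := map_mx relu v.

Definition Lambda (M sigma t : R) : R :=
  if t <= sigma - M^-1 then 0 else 1 - M * `|t - sigma|.

Definition theta d (s : nat) (M : R) (y x : 'cV[R]_d) : R :=
  relu (\sum_(i < d | (i < s)%N) Lambda M (y i 0) (x i 0) - (s%:R - 1)).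

Definition lqnorm (q : R) m n (A : 'M[R]_(m, n)) : R :=
  (\sum_(i < m) \sum_(j < n) `|A i j| `^ q) `^ q^-1.

(* A network with input width n0, hidden widths hs = (N_1,...,N_{L-1}),
   output width m: the list of pairs (W^i, b^i), i = 1..L. *)
Fixpoint net (n0 : nat) (hs : seq nat) (m : nat) : Type :=
  match hs with
  | [::] => ('M[R]_(m, n0) * 'cV[R]_m)%type
  | n1 :: hs' => (('M[R]_(n1, n0) * 'cV[R]_n1) * net n1 hs' m)%type
  end.

Fixpoint realize (n0 : nat) (hs : seq nat) (m : nat) :
    net n0 hs m -> 'cV[R]_n0 -> 'cV[R]_m :=
  match hs with
  | [::] => fun Phi x => Phi.1 *m x + Phi.2
  | n1 :: hs' => fun Phi x =>
      realize Phi.2 (relu_vec (Phi.1.1 *m x + Phi.1.2))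
  end.

Fixpoint netnorm (q : R) (n0 : nat) (hs : seq nat) (m : nat) :
    net n0 hs m -> R :=
  match hs with
  | [::] => fun Phi => Num.max (lqnorm q Phi.1) (lqnorm q Phi.2)
  | n1 :: hs' => fun Phi =>
      Num.max (Num.max (lqnorm q Phi.1.1) (lqnorm q Phi.1.2)) (netnorm q Phi.2)
  end.

Definition H (q : R) (n0 : nat) (hs : seq nat) (m : nat) (c : R)
  : set ('cV[R]_n0 -> 'cV[R]_m) :=
  [set f | exists Phi : net n0 hs m, netnorm q Phi <= c /\ f = realize Phi].

End Defs.

(* For i < s, the first hidden layer computes relu (al (x_i - y_i + 1/M)) and
   relu (al (x_i - y_i)), plus s constant neurons.  Since
   Lambda_{M,y_i}(x_i) = M relu (x_i - y_i + 1/M) - 2 M relu (x_i - y_i),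
   a single neuron of the second layer then carries al^2/(2M) times the
   argument of theta, and its ReLU is al^2/(2M) theta.  The remaining L - 2
   layers pass this value on, multiplying it by c in every hidden layer and by
   nu c at the output.  Every weight matrix and bias vector has at most 3s
   nonzero entries, all of modulus at most al, so its l^q norm is at most
   al (3s)^(1/q); the choice al = c / (3s)^(1/q) bounds all norms by c and
   produces the constant of the statement. *)

From HB Require Import structures.
From mathcomp Require Import all_boot all_order all_algebra.
From mathcomp Require Import all_classical all_reals.
From mathcomp Require Import exp.
From mathcomp Require Import ring lra zify.
Import Order.TTheory GRing.Theory Num.Theory.
Local Open Scope ring_scope.

Section Relu.
Context {R : realType}.
Implicit Types a u : R.

Lemma relu_ge0 u : 0 <= relu u.
Proof. by rewrite /relu le_max lexx. Qed.

Lemma ger0_relu {u} : 0 <= u -> relu u = u.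
Proof. by move=> u_ge0; apply/max_idPr. Qed.

Lemma ler0_relu {u} : u <= 0 -> relu u = 0.
Proof. by move=> u_le0; apply/max_idPl. Qed.

Lemma reluMl a u : 0 <= a -> relu (a * u) = a * relu u.
Proof.
move=> a_ge0; have [u_ge0|u_lt0] := lerP 0 u.
  by rewrite !ger0_relu // mulr_ge0.
by rewrite !ler0_relu ?mulr0 ?(ltW u_lt0) // mulr_ge0_le0 // ltW.
Qed.

Lemma relu_vecE n (v : 'cV[R]_n) i : relu_vec v i 0 = relu (v i 0).
Proof. by rewrite mxE. Qed.

Lemma Lambda_relu (M sigma t : R) : 0 < M ->
  Lambda M sigma t = M * relu (t - sigma + M^-1) - 2 * M * relu (t - sigma).
Proof.
move=> M_gt0; have MV : M * M^-1 = 1 by rewrite mulfV // gt_eqF.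
have MV_gt0 : 0 < M^-1 by rewrite invr_gt0.
rewrite /Lambda; case: ifPn => [t_le|].
  by rewrite !ler0_relu ?mulr0 ?subr0 //; lra.
rewrite -ltNge => t_gt; rewrite (@ger0_relu (t - sigma + M^-1)); last lra.
have [t_le0|t_gt0] := lerP (t - sigma) 0.
  by rewrite ler0_relu // ler0_norm // mulrDr MV; lra.
by rewrite ger0_relu ?gtr0_norm ?mulrDr ?MV; lra.
Qed.

End Relu.

Section LqNorm.
Context {R : realType} {q : R}.
Hypothesis q_gt0 : 0 < q.
Let q_neq0 : q != 0. Proof. exact: lt0r_neq0. Qed.

Lemma lqnorm0 m n : lqnorm q (0 : 'M[R]_(m, n)) = 0.
Proof.
rewrite /lqnorm big1 ?powR0 ?invr_eq0 // => i _.
by rewrite big1 // => j _; rewrite mxE normr0 powR0.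
Qed.

Lemma lqnorm_le_sparse m n N (A : 'M[R]_(m, n)) (g : 'I_N -> 'I_m * 'I_n) (e : R) :
  0 <= e -> (forall i j, `|A i j| <= e) ->
  (forall i j, A i j != 0 -> (i, j) \in codom g) ->
  lqnorm q A <= e * N%:R `^ q^-1.
Proof.
move=> e_ge0 A_le A_supp.
have powq_le i j : `|A i j| `^ q <= e `^ q.
  by apply: ge0_ler_powR; rewrite ?nnegrE ?(ltW q_gt0).
have sum_le : \sum_i \sum_j `|A i j| `^ q <= e `^ q *+ N.
  rewrite pair_bigA /= (bigID [in codom g]) /= [X in _ + X]big1 ?addr0; last first.
    move=> [i j] /= ij_out; have /eqP -> : A i j == 0.
      by apply: contraNT ij_out; apply: A_supp.
    by rewrite normr0 powR0.
  apply: (@le_trans _ _ (\sum_(p in codom g) e `^ q)); first exact: ler_sum.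
  rewrite sumr_const; apply: ler_wpMn2l; first exact: powR_ge0.
  by rewrite (leq_trans (card_size _)) // size_codom card_ord.
have -> : e * N%:R `^ q^-1 = (e `^ q *+ N) `^ q^-1.
  rewrite -[e `^ q *+ N]mulr_natl powRM ?powR_ge0 // -powRrM mulfV //.
  by rewrite powRr1 // mulrC.
rewrite /lqnorm; apply: ge0_ler_powR;
  rewrite ?nnegrE ?invr_ge0 ?(ltW q_gt0) ?mulrn_wge0 ?powR_ge0 //.
by apply: sumr_ge0 => i _; apply: sumr_ge0 => j _; apply: powR_ge0.
Qed.

Lemma lqnorm_scale_delta m n (i : 'I_m) (j : 'I_n) (x : R) :
  lqnorm q (x *: delta_mx i j) <= `|x|.
Proof.
have := @lqnorm_le_sparse _ _ 1 (x *: delta_mx i j) (fun=> (i, j)) `|x|.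
rewrite mulr1n powR1 mulr1; apply=> // [i' j'|i' j'].
  by rewrite !mxE; case: (_ && _); rewrite ?mulr1 ?mulr0 ?normr0.
rewrite !mxE; case: andP => [[/eqP -> /eqP ->] _|_]; last by rewrite mulr0 eqxx.
by apply/codomP; exists ord0.
Qed.

End LqNorm.

Section Relay.
Context {R : realType} {B : nat}.

Fixpoint relay_net (w a : R) (k : nat) : net R B.+1 (nseq k B.+1) 1 :=
  match k return net R B.+1 (nseq k B.+1) 1 with
  | 0%N => (a *: delta_mx ord0 ord0, 0)
  | k'.+1 => ((w *: delta_mx ord0 ord0, 0), relay_net w a k')
  end.

Lemma scale_delta_mulmx00 m n (x : R) (v : 'M[R]_(B.+1, n)) j :
  (x *: delta_mx (ord0 : 'I_m.+1) ord0 *m v) ord0 j = x * v ord0 j.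
Proof.
rewrite -scalemxAl mxE mxE (bigD1 ord0) //= big1 ?addr0 => [|k k_neq0].
  by rewrite mxE !eqxx mul1r.
by rewrite mxE (negbTE k_neq0) andbF mul0r.
Qed.

Lemma realize_relay_net (w a : R) k (v : 'cV[R]_B.+1) :
  0 <= w -> 0 <= v ord0 0 ->
  realize (relay_net w a k) v = const_mx (a * w ^+ k * v ord0 0).
Proof.
move=> w_ge0; elim: k v => [|k IHk] v v_ge0 /=.
  by apply/matrixP => i j; rewrite addr0 !ord1 scale_delta_mulmx00 mxE expr0 mulr1.
rewrite IHk relu_vecE ?relu_ge0 // addr0 scale_delta_mulmx00 ger0_relu ?mulr_ge0 //.
by rewrite exprS mulrA -(mulrA a) (mulrC _ w).
Qed.

Lemma netnorm_relay_net (q c w a : R) k : 0 < q -> `|w| <= c -> `|a| <= c ->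
  netnorm q (relay_net w a k) <= c.
Proof.
move=> q_gt0 w_le a_le; have c_ge0 : 0 <= c := le_trans (normr_ge0 w) w_le.
elim: k => [|k IHk] /=; rewrite !ge_max lqnorm0 // c_ge0 ?IHk ?andbT.
  by apply: le_trans a_le; apply: lqnorm_scale_delta.
by apply: le_trans w_le; apply: lqnorm_scale_delta.
Qed.

End Relay.

(* Out-of-range indices read as 0, so that layers can address the input by a
   natural-number index. *)
Definition entry {R : realType} {d} (v : 'cV[R]_d) (k : nat) : R :=
  if insub k is Some i then v i 0 else 0.

Section Entry.
Context {R : realType} {d : nat} (v : 'cV[R]_d).

Lemma entry_ord (i : 'I_d) : entry v i = v i 0.
Proof. by rewrite /entry valK. Qed.

Lemma entry_in01 k : (forall i, 0 <= v i 0 <= 1) -> 0 <= entry v k <= 1.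
Proof. by move=> v01; rewrite /entry; case: insub => [i|] //=; rewrite lexx ler01. Qed.

Lemma sum_select_entry (a : R) k :
  \sum_(i < d) (if (i : nat) == k then a else 0) * v i 0 = a * entry v k.
Proof.
rewrite /entry; case: insubP => [i _ <-|k_out].
  rewrite (bigD1 i) //= eqxx big1 ?addr0 // => j j_neq_i.
  by rewrite (negbTE (j_neq_i : (j : nat) != i)) mul0r.
rewrite mulr0 big1 // => i _; case: eqP => [i_eq|_]; last by rewrite mul0r.
by move: k_out; rewrite -i_eq ltn_ord.
Qed.

End Entry.

Lemma sum_three_blocks (V : nmodType) s (F : nat -> V) :
  \sum_(0 <= k < 3 * s) F k = \sum_(0 <= i < s) (F i + F (i + s)%N + F (i + 2 * s)%N).
Proof.
have shift a : \sum_(a <= i < a + s) F i = \sum_(0 <= i < s) F (i + a)%N.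
  by rewrite -{1}[a]add0n big_addn addKn.
have -> : (3 * s = s + s + s)%N by lia.
rewrite (big_cat_nat (leq0n (s + s)) (leq_addr s _)) (big_cat_nat (leq0n s) (leq_addr s s)).
rewrite !shift !big_split /=; congr (_ + _ + _).
  by apply: eq_bigr => i _; rewrite addn0.
by apply: eq_bigr => i _; rewrite mul2n -addnn.
Qed.

Section HatLayers.
Context {R : realType} {d B : nat} (s : nat) (M al : R) (y : 'cV[R]_d).

Definition hat_offset : R := (s%:R - 1) / (s%:R * M).

Definition hat_weight : 'M[R]_(B, d) :=
  \matrix_(k, i) if (k < 2 * s)%N && ((i : nat) == k %% s)%N then al else 0.

(* The constant [s - 1] subtracted in theta is spread over the s neurons of
   the third block, so that every bias entry stays below [al]. *)
Definition hat_bias : 'cV[R]_B := \col_k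
  if (k < s)%N then al * (M^-1 - entry y k)
  else if (k < 2 * s)%N then - (al * entry y (k - s))
  else if (k < 3 * s)%N then al * hat_offset else 0.

Definition hat_out_at (k : nat) : R :=
  if (k < s)%N then al / 2 else if (k < 2 * s)%N then - al
  else if (k < 3 * s)%N then - (al / 2) else 0.

Definition hat_out_weight : 'M[R]_B :=
  \matrix_(j, k) if (j : nat) == 0%N then hat_out_at k else 0.

Definition hat_hidden (x : 'cV[R]_d) (k : nat) : R :=
  if (k < s)%N then al * (entry x k - entry y k + M^-1)
  else if (k < 2 * s)%N then al * (entry x (k - s) - entry y (k - s))
  else if (k < 3 * s)%N then al * hat_offset else 0.

Lemma hat_layerE x (k : 'I_B) : (hat_weight *m x + hat_bias) k 0 = hat_hidden x k.
Proof.
rewrite !mxE; under eq_bigr do rewrite mxE.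
rewrite (eq_bigr (fun i : 'I_d =>
  (if (i : nat) == (k %% s)%N then (if (k < 2 * s)%N then al else 0) else 0) * x i 0)).
  rewrite sum_select_entry /hat_hidden.
  have [k_lt_s|k_ge_s] := ltnP k s.
    by rewrite (_ : (k < 2 * s)%N) ?modn_small //; [ring | lia].
  have [k_lt_2s|_] := ltnP k (2 * s); last by rewrite mul0r add0r.
  rewrite -{1}(subnK k_ge_s) modnDr modn_small; first ring.
  by rewrite ltn_subLR //; lia.
by move=> i _; case: (k < 2 * s)%N; case: (_ == _).
Qed.

Lemma hat_block x i : 0 < M -> 0 <= al -> (i < s)%N ->
  hat_out_at i * relu (hat_hidden x i) + hat_out_at (i + s) * relu (hat_hidden x (i + s))
    + hat_out_at (i + 2 * s) * relu (hat_hidden x (i + 2 * s))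
  = al ^+ 2 / (2 * M) * Lambda M (entry y i) (entry x i) - al ^+ 2 / 2 * hat_offset.
Proof.
move=> M_gt0 al_ge0 i_lt_s; have offset_ge0 : 0 <= hat_offset.
  by rewrite divr_ge0 ?mulr_ge0 ?ler0n ?(ltW M_gt0) // subr_ge0 ler1n; lia.
rewrite /hat_out_at /hat_hidden i_lt_s.
have -> : (i + s < s)%N = false by lia.
have -> : (i + s < 2 * s)%N by lia.
have -> : (i + 2 * s < s)%N = false by lia.
have -> : (i + 2 * s < 2 * s)%N = false by lia.
have -> : (i + 2 * s < 3 * s)%N by lia.
rewrite addnK Lambda_relu // (ger0_relu (mulr_ge0 al_ge0 offset_ge0)) !reluMl //.
by field; rewrite gt_eqF.
Qed.

Lemma lqnorm_hat_weight q : 0 < q -> 0 <= al -> (0 < s)%N -> (s <= d)%N -> (3 * s <= B)%N ->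
  lqnorm q hat_weight <= al * (3 * s)%:R `^ q^-1.
Proof.
move=> q_gt0 al_ge0 s_gt0 s_le_d s_le_B.
have col_lt (k : 'I_(3 * s)) : (k %% s < d)%N := leq_trans (ltn_pmod k s_gt0) s_le_d.
pose g k := (widen_ord s_le_B k, Ordinal (col_lt k)).
apply: (@lqnorm_le_sparse _ _ q_gt0 _ _ _ _ g) => // k i.
  by rewrite mxE; case: ifP; rewrite ?normr0 ?ger0_norm.
rewrite mxE; case: ifP => [/andP[k_lt /eqP i_eq] _|]; last by rewrite eqxx.
have k_lt' : (k < 3 * s)%N by lia.
by apply/codomP; exists (Ordinal k_lt'); congr pair; apply: val_inj.
Qed.

Lemma lqnorm_hat_out_weight q : 0 < q -> 0 <= al -> (0 < s)%N -> (3 * s <= B)%N ->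
  lqnorm q hat_out_weight <= al * (3 * s)%:R `^ q^-1.
Proof.
move=> q_gt0 al_ge0 s_gt0 s_le_B; have B_gt0 : (0 < B)%N by lia.
pose g k := (Ordinal B_gt0, widen_ord s_le_B k).
apply: (@lqnorm_le_sparse _ _ q_gt0 _ _ _ _ g) => // j k.
  rewrite mxE /hat_out_at; case: ifP => _; last by rewrite normr0.
  case: ifP => _; first by rewrite ger0_norm ?divr_ge0 // ler_pdivrMr // ler_peMr // ler1n.
  case: ifP => _; first by rewrite normrN ger0_norm.
  case: ifP => _; last by rewrite normr0.
  by rewrite normrN ger0_norm ?divr_ge0 // ler_pdivrMr // ler_peMr // ler1n.
rewrite mxE; have [j0 nz|_] := eqVneq (j : nat) 0%N; last by rewrite eqxx.
have k_lt : (k < 3 * s)%N.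
  apply: contraNT nz; rewrite -leqNgt /hat_out_at => k_ge.
  have -> : (k < s)%N = false by lia.
  have -> : (k < 2 * s)%N = false by lia.
  by have -> : (k < 3 * s)%N = false by lia.
by apply/codomP; exists (Ordinal k_lt); congr pair; apply: val_inj.
Qed.

Lemma lqnorm_hat_bias q : 0 < q -> 0 <= al -> 1 <= M -> (0 < s)%N -> (3 * s <= B)%N ->
  (forall i, 0 <= y i 0 <= 1) ->
  lqnorm q hat_bias <= al * (3 * s)%:R `^ q^-1.
Proof.
move=> q_gt0 al_ge0 M_ge1 s_gt0 s_le_B y01.
have M_gt0 : 0 < M := lt_le_trans ltr01 M_ge1.
have scale_le u : `|u| <= 1 -> `|al * u| <= al.
  by move=> u_le; rewrite normrM ger0_norm // ler_piMr.
have MV01 : 0 < M^-1 <= 1 by rewrite invr_gt0 M_gt0 invf_le1.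
have offset01 : 0 <= hat_offset <= 1.
  rewrite /hat_offset divr_ge0 ?mulr_ge0 ?ler0n ?(ltW M_gt0) ?subr_ge0 ?ler1n //=.
  rewrite ler_pdivrMr ?mulr_gt0 ?ltr0n // mul1r.
  have : (1 <= s%:R :> R) by rewrite ler1n.
  by move: M_ge1; nra.
pose g k := (widen_ord s_le_B k, 0 : 'I_1).
apply: (@lqnorm_le_sparse _ _ q_gt0 _ _ _ _ g) => // k j.
  rewrite mxE; case: ifP => _.
    by apply: scale_le; have := entry_in01 y k y01; rewrite ler_norml; lra.
  case: ifP => _.
    rewrite normrN; apply: scale_le.
    by have := entry_in01 y (k - s) y01; rewrite ler_norml; lra.
  case: ifP => _; last by rewrite normr0.
  by apply: scale_le; rewrite ler_norml; lra.
move=> nz; have k_lt : (k < 3 * s)%N.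
  apply: contraNT nz; rewrite -leqNgt mxE => k_ge.
  have -> : (k < s)%N = false by lia.
  have -> : (k < 2 * s)%N = false by lia.
  by have -> : (k < 3 * s)%N = false by lia.
by apply/codomP; exists (Ordinal k_lt); rewrite (ord1 j); congr pair; apply: val_inj.
Qed.

Lemma hat_outputE x (j : 'I_B) : 0 < M -> 0 <= al ->
  (0 < s)%N -> (s <= d)%N -> (3 * s <= B)%N -> (j : nat) = 0%N ->
  (hat_out_weight *m relu_vec (hat_weight *m x + hat_bias)) j 0 =
  al ^+ 2 / (2 * M) * (\sum_(i < d | (i < s)%N) Lambda M (y i 0) (x i 0) - (s%:R - 1)).
Proof.
move=> M_gt0 al_ge0 s_gt0 s_le_d s_le_B j0; rewrite mxE.
under eq_bigr do rewrite mxE j0 eqxx relu_vecE hat_layerE.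
set F := fun k => hat_out_at k * relu (hat_hidden x k).
have -> : \sum_(k < B) F k = \sum_(0 <= k < 3 * s) F k.
  rewrite -(big_mkord xpredT) (big_cat_nat (leq0n _) s_le_B) /=.
  rewrite [X in _ + X]big_nat_cond [X in _ + X]big1 ?addr0 // => k /andP[/andP[k_ge _] _].
  rewrite /F /hat_out_at.
  have -> : (k < s)%N = false by lia.
  have -> : (k < 2 * s)%N = false by lia.
  have -> : (k < 3 * s)%N = false by lia.
  by rewrite mul0r.
rewrite sum_three_blocks.
rewrite (eq_big_nat _ _ (fun i i_lt => hat_block x _ M_gt0 al_ge0 (proj2 (andP i_lt)))).
have -> : \sum_(i < d | (i < s)%N) Lambda M (y i 0) (x i 0) =
    \sum_(0 <= i < s) Lambda M (entry y i) (entry x i).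
  rewrite (big_nat_widen _ _ _ _ _ s_le_d) big_mkord.
  by apply: eq_bigr => i _; rewrite !entry_ord.
rewrite sumrB -mulr_sumr sumr_const_nat subn0 -mulr_natr /hat_offset.
by field; rewrite !gt_eqF ?ltr0n.
Qed.

End HatLayers.

Lemma sqrr_div_powRV (R : realType) (q c : R) (s : nat) : 0 < q -> (0 < s)%N ->
  (c / (3 * s)%:R `^ q^-1) ^+ 2 = c ^+ 2 * s%:R `^ (1 - 2 / q) / (3 `^ (2 / q) * s%:R).
Proof.
move=> q_gt0 s_gt0; have s_neq0 : s%:R != 0 :> R by rewrite pnatr_eq0 -lt0n.
have two_q : 2 / q = q^-1 + q^-1 by field; rewrite gt_eqF.
rewrite expr_div_n [_ `^ q^-1 ^+ 2]expr2 -powRD; last first.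
  by apply/implyP => _; rewrite pnatr_eq0 muln_eq0; lia.
rewrite -two_q natrM powRM ?ler0n // powRB ?powRr1 ?ler0n ?s_neq0 ?implybT //.
by field; rewrite s_neq0 !gt_eqF ?powR_gt0 ?ltr0n.
Qed.

Theorem lemma2p5 (R : realType) (d L B : nat) (c q : R) (s : nat)
  (hL : (3 <= L)%N) (hB : (3 <= B)%N) (hc : 0 < c)
  (hq1 : 1 <= q) (hq2 : q <= 2)
  (hs1 : (1 <= s)%N) (hsd : (s <= d)%N) (hsB : (3 * s <= B)%N) :
  forall (M : nat) (nu : R) (y : 'cV[R]_d),
    (0 < M)%N -> (nu = 1 \/ nu = -1) -> (forall i, 0 <= y i 0 <= 1) ->
    @H R q d (nseq L.-1 B) 1 c
      (fun x : 'cV[R]_d =>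
         const_mx (nu *
           ((c ^+ L * (s%:R `^ (1 - 2 / q)) / (2 * 3 `^ (2 / q)))
              / (M%:R * s%:R))
           * theta s M%:R y x)).
Proof.
move=> M nu y M_gt0 nu_pm1 y01.
case: B hB hsB => [|n] // _ hsB; case: L hL => [|[|[|k]]] // _.
have q_gt0 : 0 < q by lra.
have M_ge1 : 1 <= M%:R :> R by rewrite ler1n.
pose al := c / (3 * s)%:R `^ q^-1.
have al_ge0 : 0 <= al by rewrite divr_ge0 ?powR_ge0 ?ltW.
have c_eq : c = al * (3 * s)%:R `^ q^-1.
  by rewrite divfK // gt_eqF // powR_gt0 // ltr0n; lia.
exists ((hat_weight s al, hat_bias s M%:R al y),
        ((hat_out_weight s al, 0), relay_net c (nu * c) k)); split.
  have c_le : `|c| <= c by rewrite gtr0_norm.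
  have nu_c : `|nu * c| <= c.
    by case: nu_pm1 => ->; rewrite ?mul1r ?mulN1r ?normrN.
  rewrite /= !ge_max lqnorm0 ?(ltW hc) // (netnorm_relay_net _ _ _ _ _ q_gt0 c_le nu_c).
  rewrite !andbT c_eq.
  by rewrite lqnorm_hat_weight ?lqnorm_hat_bias ?lqnorm_hat_out_weight.
apply: funext => x /=.
rewrite realize_relay_net ?relu_vecE ?relu_ge0 ?(ltW hc) // addr0 hat_outputE ?ltr0n //.
rewrite reluMl; last by rewrite divr_ge0 ?exprn_ge0 // mulr_ge0 ?ler0n.
congr const_mx; rewrite /theta sqrr_div_powRV // !exprS.
by field; rewrite !gt_eqF ?powR_gt0 ?ltr0n //; lra.
Qed.
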